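(* Let $G(x,u)=\sum_{n\ge0}\frac{u^n}{n!}G_n(x)$ and $H(x,u)=\sum_{n\ge0}\frac{u^n}{n!}H_n(x)$. Then \[H(x,u)=(1+x)\left(G(x,u)-\tfrac12G(x,u)^2\right).\]
   Context: $G_0(x)=\frac{x}{1+x}$, $H_0(x)=\frac{x(x+2)}{2(x+1)}$, and for $n\ge1$ the polynomials $G_n,H_n$ are defined by $G_1=H_1=1$, $G_{n+1}(x)=(2n+nx)G_n(x)+(1+x)^2G_n'(x)$, $H_{n+1}(x)=(2n-1+(n-1)x)H_n(x)+(1+x)^2H_n'(x)$. The identity is of formal power series in $u$ and $x$. *)

From HB Require Import structures.
From mathcomp Require Import all_boot all_order all_algebra fraction.
Set Implicit Arguments. Unset Strict Implicit. Unset Printing Implicit Defensive.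
Import Order.TTheory GRing.Theory Num.Theory.
Local Open Scope ring_scope.

Notation K := {fraction {poly rat}}.
Notation toK := (@FracField.tofrac _ : {poly rat} -> K).

(* gpoly m = G_{m+1}(x), for m >= 0 (so gpoly 0 = G_1 = 1) and
   G_{n+1} = (2n + n x) G_n + (1+x)^2 G_n'. *)
Fixpoint gpoly (m : nat) : {poly rat} :=
  match m with
  | 0 => 1
  | m'.+1 => ((2 * m'.+1)%:R%:P + m'.+1%:R *: 'X) * gpoly m'
             + ('X + 1) ^+ 2 * (gpoly m')^`()
  end.

(* hpoly m = H_{m+1}(x); H_{n+1} = (2n-1 + (n-1) x) H_n + (1+x)^2 H_n'. *)
Fixpoint hpoly (m : nat) : {poly rat} :=
  match m with
  | 0 => 1
  | m'.+1 => ((2 * m'.+1 - 1)%:R%:P + (m'.+1 - 1)%:R *: 'X) * hpoly m'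
             + ('X + 1) ^+ 2 * (hpoly m')^`()
  end.

Definition xK : K := toK 'X.

Definition Gn (n : nat) : K :=
  match n with
  | 0 => xK / (1 + xK)
  | n'.+1 => toK (gpoly n')
  end.

Definition Hn (n : nat) : K :=
  match n with
  | 0 => xK * (xK + 2) / (2 * (xK + 1))
  | n'.+1 => toK (hpoly n')
  end.

(* Exponential generating functions sum_n a_n u^n/n! are represented by their
   sequences of coefficients a : nat -> K.  Product of EGFs: *)
Definition egf_mul (a b : nat -> K) (n : nat) : K :=
  \sum_(k < n.+1) 'C(n, k)%:R * a k * b (n - k)%N.

Definition Gser : nat -> K := Gn.
Definition Hser : nat -> K := Hn.

From HB Require Import structures.
From mathcomp Require Import all_boot all_order all_algebra fraction.
From mathcomp Require Import ring.
From Stdlib Require Import FunctionalExtensionality.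
Set Implicit Arguments. Unset Strict Implicit. Unset Printing Implicit Defensive.
Import GRing.Theory.
Local Open Scope ring_scope.

(* Put y = 1 + x, A_n = y G_n, B_n = 2 y H_n, and let C be the binomial
   self-convolution of A, so that C_n is n! times the u^n-coefficient of (yG)^2.
   The defining recurrences become a_{n+1} = (n (x + 2) + s) a_n + y^2 a_n',
   with s = -y for A and s = -2y for B.  By the Leibniz rule the binomial
   convolution of solutions for s and t solves the recurrence for s + t, and
   multiplying a solution by y shifts s by -y.  Hence 2yA - C and B solve the
   same recurrence from the same initial term x (x + 2), so B = 2yA - C, which
   is the claim after division by 2y. *)

Definition binconv (R : pzRingType) (a b : nat -> R) (n : nat) : R :=
  \sum_(k < n.+1) 'C(n, k)%:R * a k * b (n - k)%N.

Lemma egf_mulE : egf_mul = @binconv K.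
Proof. by []. Qed.

Section BinomialConvolution.
Variable R : pzRingType.
Implicit Types a b : nat -> R.

Lemma binconvS a b n :
  binconv a b n.+1 = binconv (fun k => a k.+1) b n + binconv a (fun k => b k.+1) n.
Proof.
rewrite /binconv big_ord_recl /= bin0 subn0.
under eq_bigr => i _ do rewrite /bump /= add1n subSS binS natrD !mulrDl.
rewrite big_split /= addrA addrC; congr (_ + _).
rewrite [in RHS]big_ord_recl /= bin0 subn0; congr (_ + _).
rewrite big_ord_recr /= bin_small // !mul0r addr0.
by apply: eq_bigr => i _; rewrite /bump /= add1n subnSK.
Qed.

Lemma rmorph_binconv (S : pzRingType) (f : {rmorphism R -> S}) a b n :
  f (binconv a b n) = binconv (f \o a) (f \o b) n.
Proof. by rewrite rmorph_sum; apply: eq_bigr => i _; rewrite !rmorphM rmorph_nat. Qed.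

End BinomialConvolution.

Lemma binconv_mulr (R : comPzRingType) (a b : nat -> R) (s t : R) n :
  binconv (fun k => a k * s) (fun k => b k * t) n = binconv a b n * (s * t).
Proof. by rewrite /binconv mulr_suml; apply: eq_bigr => i _; ring. Qed.

Lemma deriv_binconv (R : nzRingType) (a b : nat -> {poly R}) n :
  (binconv a b n)^`() =
  binconv (fun k => (a k)^`()) b n + binconv a (fun k => (b k)^`()) n.
Proof.
rewrite /binconv raddf_sum -big_split; apply: eq_bigr => i _ /=.
by rewrite -!mulrA !mulr_natl derivMn derivM mulrnDl.
Qed.

Section DifferentialRecurrence.
Variable R : comNzRingType.
Implicit Types (s t : {poly R}) (a b : nat -> {poly R}).

Definition solves_rec s a :=
  forall n, a n.+1 = (n%:R * ('X + 2%:R) + s) * a n + ('X + 1) ^+ 2 * (a n)^`().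

Lemma solves_rec_eq s a b : solves_rec s a -> solves_rec s b -> a 0 = b 0 -> a =1 b.
Proof. by move=> ha hb e0; elim=> [|n IH] //; rewrite ha hb IH. Qed.

Lemma solves_recB s a b :
  solves_rec s a -> solves_rec s b -> solves_rec s (fun n => a n - b n).
Proof. by move=> ha hb n; rewrite ha hb derivB; ring. Qed.

Lemma solves_recMn s a m : solves_rec s a -> solves_rec s (fun n => a n *+ m).
Proof. by move=> ha n; rewrite ha derivMn; ring. Qed.

Lemma solves_rec_mulXaddl s a :
  solves_rec s a -> solves_rec (s - ('X + 1)) (fun n => ('X + 1) * a n).
Proof. by move=> ha n; rewrite ha derivM derivD derivX derivC; ring. Qed.

Lemma solves_rec_binconv s t a b :
  solves_rec s a -> solves_rec t b -> solves_rec (s + t) (binconv a b).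
Proof.
move=> ha hb n; rewrite binconvS deriv_binconv /binconv -!big_split !mulr_sumr.
rewrite -big_split; apply: eq_bigr => -[k lt_kn] _ /=.
rewrite ha hb natrB -1?ltnS //.
by move: ('C(n, k)%:R : {poly R}) (a k) (b (n - k)%N) => c p q; ring.
Qed.

End DifferentialRecurrence.

Definition gscaled (n : nat) : {poly rat} :=
  if n is m.+1 then ('X + 1) * gpoly m else 'X.

Definition hscaled (n : nat) : {poly rat} :=
  if n is m.+1 then ('X + 1) * hpoly m *+ 2 else 'X * ('X + 2%:R).

Lemma gscaled_rec : solves_rec (- ('X + 1)) gscaled.
Proof.
case=> [|m] /=; first by rewrite derivX; ring.
rewrite derivM derivD derivX derivC -mul_polyC !polyC_natr; ring.
Qed.

Lemma hscaled_rec : solves_rec (- ('X + 1) - ('X + 1)) hscaled.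
Proof.
case=> [|m] /=; first by rewrite !derivE; ring.
rewrite derivMn derivM derivD derivX derivC -mul_polyC !polyC_natr.
rewrite mulnS add2n !subSS !subn0; ring.
Qed.

Lemma hscaledE :
  hscaled =1 fun n => ('X + 1) * gscaled n *+ 2 - binconv gscaled gscaled n.
Proof.
apply: solves_rec_eq hscaled_rec _ _.
- apply: solves_recB (solves_rec_binconv gscaled_rec gscaled_rec).
  exact: solves_recMn (solves_rec_mulXaddl gscaled_rec).
- by rewrite /binconv big_ord1 bin0 /=; ring.
Qed.

Lemma unscale_half_square (F : fieldType) (t a c : F) : t != 0 -> 2%:R != 0 :> F ->
  (t * a *+ 2 - c) / (2%:R * t) = t * (a / t - 2^-1 * (c / t ^+ 2)).
Proof. by move=> t0 two0; rewrite -mulr_natr; field; rewrite t0 two0. Qed.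

Lemma tofrac_XaddC1_neq0 : toK ('X + 1) != 0.
Proof. by rewrite tofrac_eq0 -polyC1 monic_neq0 ?monicXaddC. Qed.

Lemma two_neq0 : 2%:R != 0 :> K.
Proof. by rewrite -(rmorph_nat toK) tofrac_eq0 -polyC_natr polyC_eq0. Qed.

Lemma GnE n : Gn n = toK (gscaled n) / toK ('X + 1).
Proof.
case: n => [|m]; rewrite [Gn _]/= [gscaled _]/=; first by rewrite rmorphD rmorph1 addrC.
by rewrite rmorphM mulrAC divff ?mul1r ?tofrac_XaddC1_neq0.
Qed.

Lemma HnE n : Hn n = toK (hscaled n) / (2%:R * toK ('X + 1)).
Proof.
case: n => [|m]; rewrite [Hn _]/= [hscaled _]/=.
  by rewrite rmorphM rmorphD rmorph_nat rmorphD rmorph1.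
rewrite rmorphMn rmorphM -mulr_natl mulrA mulrAC divff ?mul1r //.
exact: mulf_neq0 two_neq0 tofrac_XaddC1_neq0.
Qed.

Theorem mainTheorem7 :
  Hser = (fun n => (1 + xK) * (Gser n - 2^-1 * egf_mul Gser Gser n)).
Proof.
apply: functional_extensionality => n.
rewrite /Hser /Gser HnE GnE egf_mulE (functional_extensionality _ _ GnE).
rewrite binconv_mulr -(rmorph_binconv toK) -expr2 exprVn.
rewrite hscaledE rmorphB rmorphMn rmorphM.
have -> : 1 + xK = toK ('X + 1) by rewrite rmorphD rmorph1 addrC.
exact: unscale_half_square tofrac_XaddC1_neq0 two_neq0.
Qed.
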